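(* Let $s_1^\pm,s_2^\pm\in\mathbb{R}^3$ satisfy $$|s_1^+-s_1^-|+|s_2^+-s_2^-|\le|s_1^+-s_2^-|+|s_2^+-s_1^-|,$$ and for $m=1,2$ let $L_m$ be the closed segment joining $s_m^+$ and $s_m^-$. Then $$\operatorname{dist}(L_1,L_2)\ge\frac1{\sqrt2}\min_{m\ne n}\operatorname{dist}(s_m^\pm,L_n),$$ where the minimum is over $m\neq n$ in $\{1,2\}$ and both choices of sign. *)

From Stdlib Require Import Reals.
From Coquelicot Require Import Coquelicot.
Open Scope R_scope.

Definition vec3 : Type := (R * R * R)%type.

Definition edist (p q : vec3) : R :=
  let '(p1, p2, p3) := p in let '(q1, q2, q3) := q in
  sqrt ((p1 - q1) ^ 2 + (p2 - q2) ^ 2 + (p3 - q3) ^ 2).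

Definition lerp (a b : vec3) (t : R) : vec3 :=
  let '(a1, a2, a3) := a in let '(b1, b2, b3) := b in
  ((1 - t) * a1 + t * b1, (1 - t) * a2 + t * b2, (1 - t) * a3 + t * b3).

Definition segment (a b : vec3) : vec3 -> Prop :=
  fun x => exists t, 0 <= t <= 1 /\ x = lerp a b t.

Definition dist_pt (p : vec3) (A : vec3 -> Prop) : R :=
  real (Glb_Rbar (fun d => exists x, A x /\ d = edist p x)).

Definition dist_sets (A B : vec3 -> Prop) : R :=
  real (Glb_Rbar (fun d => exists x y, A x /\ B y /\ d = edist x y)).

From Stdlib Require Import Reals Lra Psatz.
From Coquelicot Require Import Coquelicot.
Open Scope R_scope.

(* Let x in L1 and y in L2 realize dist(L1, L2) = |x - y|.  If x or y is
   an endpoint there is nothing to prove; otherwise x - y is orthogonal to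
   both segments.  The two paths s1+ -> x, y -> s2- and s1- -> x, y -> s2+
   have total length |s1+ - s1-| + |s2+ - s2-|, so by hypothesis one of them,
   say the first, is no longer than the diagonal |s1+ - s2-|.  Squaring this
   and using orthogonality gives 2 a b (1 - cos theta) <= |x - y|^2, where
   a <= b are the two arm lengths and theta the angle between the segments.
   This makes the perpendicular from s1+ or from s2+ to the other segment
   have squared length at most 2 |x - y|^2.  The computation is done on the
   Gram data of the two parametrizations; the other cases follow by
   reversing or exchanging the segments. *)

(* Parametrize the segments as x(s) = a + s e1 and y(t) = p + t e2, and put
   w = a - p.  Their squared distance is a quadratic polynomial in (s, t)
   whose coefficients are the Gram data below. *)
Record gram : Type := Gram {
  ww : R;  we1 : R;  we2 : R;  e1e1 : R;  e2e2 : R;  e1e2 : R }.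

Definition gram_sqdist (G : gram) (s t : R) : R :=
  ww G + 2 * s * we1 G - 2 * t * we2 G
  + s ^ 2 * e1e1 G + t ^ 2 * e2e2 G - 2 * s * t * e1e2 G.

Definition gram_psd (G : gram) : Prop :=
  0 <= e1e1 G /\ 0 <= e2e2 G /\ e1e2 G ^ 2 <= e1e1 G * e2e2 G /\
  forall s t, 0 <= gram_sqdist G s t.

Definition gram_critical (G : gram) (s t : R) : Prop :=
  we1 G + s * e1e1 G - t * e1e2 G = 0 /\ - we2 G + t * e2e2 G - s * e1e2 G = 0.

(* Some endpoint, i.e. an edge of the parameter square, comes within squared
   distance r of the other segment. *)
Definition endpoint_close (G : gram) (r : R) : Prop :=
  exists u, 0 <= u <= 1 /\
    (gram_sqdist G 0 u <= r \/ gram_sqdist G 1 u <= r \/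
     gram_sqdist G u 0 <= r \/ gram_sqdist G u 1 <= r).

Definition gram_rev (G : gram) : gram :=
  Gram (ww G + 2 * we1 G - 2 * we2 G + e1e1 G + e2e2 G - 2 * e1e2 G)
       (- we1 G - e1e1 G + e1e2 G) (- we2 G + e2e2 G - e1e2 G)
       (e1e1 G) (e2e2 G) (e1e2 G).

Definition gram_swap (G : gram) : gram :=
  Gram (ww G) (- we2 G) (- we1 G) (e2e2 G) (e1e1 G) (e1e2 G).

Lemma gram_sqdist_rev G s t :
  gram_sqdist (gram_rev G) s t = gram_sqdist G (1 - s) (1 - t).
Proof. unfold gram_sqdist; simpl; ring. Qed.

Lemma gram_sqdist_swap G s t : gram_sqdist (gram_swap G) s t = gram_sqdist G t s.
Proof. unfold gram_sqdist; simpl; ring. Qed.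

Lemma gram_psd_rev G : gram_psd G -> gram_psd (gram_rev G).
Proof.
  intros (? & ? & ? & Hnn); repeat split; simpl; auto.
  intros s t; rewrite gram_sqdist_rev; apply Hnn.
Qed.

Lemma gram_psd_swap G : gram_psd G -> gram_psd (gram_swap G).
Proof.
  intros (? & ? & ? & Hnn); repeat split; simpl; auto; [lra|].
  intros s t; rewrite gram_sqdist_swap; apply Hnn.
Qed.

Lemma gram_critical_rev G s t :
  gram_critical G s t -> gram_critical (gram_rev G) (1 - s) (1 - t).
Proof. unfold gram_critical; simpl; lra. Qed.

Lemma gram_critical_swap G s t :
  gram_critical G s t -> gram_critical (gram_swap G) t s.
Proof. unfold gram_critical; simpl; lra. Qed.

Lemma endpoint_close_rev G r : endpoint_close (gram_rev G) r -> endpoint_close G r.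
Proof.
  intros (u & Hu & Hclose); exists (1 - u); split; [lra|].
  rewrite !gram_sqdist_rev, Rminus_0_r, Rminus_eq_0 in Hclose; tauto.
Qed.

Lemma endpoint_close_swap G r : endpoint_close (gram_swap G) r -> endpoint_close G r.
Proof.
  intros (u & Hu & Hclose); exists u; split; [lra|].
  rewrite !gram_sqdist_swap in Hclose; tauto.
Qed.

Section Critical.

Variables (G : gram) (s t : R).
Hypotheses (Hs : 0 < s < 1) (Ht : 0 < t < 1).
Hypotheses (Hpsd : gram_psd G) (Hcrit : gram_critical G s t).

Local Notation F := (gram_sqdist G).
Local Notation D := (gram_sqdist G s t).
Local Notation L1 := (e1e1 G).
Local Notation L2 := (e2e2 G).
Local Notation c := (e1e2 G).
Local Notation n1 := (sqrt (e1e1 G)).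
Local Notation n2 := (sqrt (e2e2 G)).

Lemma gram_sqdist_critical a b :
  F a b = D + (a - s) ^ 2 * L1 + (b - t) ^ 2 * L2 - 2 * (a - s) * (b - t) * c.
Proof.
  destruct Hcrit as [E1 E2].
  assert (Ediff : F a b - (D + (a - s) ^ 2 * L1 + (b - t) ^ 2 * L2
                            - 2 * (a - s) * (b - t) * c)
                  = 2 * (a - s) * (we1 G + s * L1 - t * c)
                    + 2 * (b - t) * (- we2 G + t * L2 - s * c))
    by (unfold gram_sqdist; ring).
  rewrite E1, E2 in Ediff; lra.
Qed.

Lemma abs_e1e2_le : Rabs c <= n1 * n2.
Proof.
  destruct Hpsd as (H1 & H2 & Hc & _).
  rewrite <- sqrt_mult, <- sqrt_Rsqr_abs by assumption.
  apply sqrt_le_1_alt; unfold Rsqr; lra.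
Qed.

(* [s * n1 + (1 - t) * n2] is |s1+ - x(s)| + |y(t) - s2-|. *)
Lemma critical_angle_gap :
  s * n1 + (1 - t) * n2 <= sqrt (F 0 1) ->
  2 * s * (1 - t) * (n1 * n2 - c) <= D.
Proof.
  intros Hlen.
  destruct Hpsd as (H1 & H2 & _ & Hnn).
  assert (Hsq : (s * n1 + (1 - t) * n2) ^ 2 <= F 0 1).
  { rewrite <- (sqrt_sqrt (F 0 1)) by apply Hnn.
    pose proof (sqrt_pos L1); pose proof (sqrt_pos L2).
    assert (0 <= s * n1 + (1 - t) * n2) by nra. nra. }
  rewrite gram_sqdist_critical in Hsq.
  pose proof (sqrt_sqrt L1 H1); pose proof (sqrt_sqrt L2 H2).
  nra.
Qed.

Hypothesis Hlen : s * n1 + (1 - t) * n2 <= sqrt (F 0 1).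
Hypothesis Hbal : s * n1 <= (1 - t) * n2.

Lemma critical_defect_bound : s ^ 2 * (L1 * L2 - c ^ 2) <= D * L2.
Proof.
  pose proof critical_angle_gap Hlen as Hgap.
  pose proof abs_e1e2_le as Hc; apply Rabs_le_between in Hc.
  destruct Hpsd as (H1 & H2 & _ & _).
  pose proof (sqrt_pos L1); pose proof (sqrt_pos L2).
  pose proof (sqrt_sqrt L1 H1); pose proof (sqrt_sqrt L2 H2).
  assert (E : s ^ 2 * (L1 * L2 - c ^ 2) = (s * (n1 * n2 - c)) * (s * (n1 * n2 + c))).
  { transitivity (s ^ 2 * ((n1 * n1) * (n2 * n2) - c ^ 2)); [congruence | ring]. }
  assert (s * (n1 * n2 + c) <= 2 * (1 - t) * L2) by nra.
  assert (0 <= s * (n1 * n2 - c)) by nra.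
  rewrite E; nra.
Qed.

(* Case s c <= t L2: the point of L2 nearest to s1p is y(t - s c / L2). *)
Lemma endpoint_close_first : s * c <= t * L2 -> endpoint_close G (2 * D).
Proof.
  intros Hsc.
  pose proof (critical_defect_bound) as Hdef.
  pose proof abs_e1e2_le as Hc; apply Rabs_le_between in Hc.
  destruct Hpsd as (H1 & H2 & _ & Hnn).
  pose proof (Hnn s t).
  pose proof (sqrt_pos L1); pose proof (sqrt_pos L2).
  pose proof (sqrt_sqrt L1 H1); pose proof (sqrt_sqrt L2 H2).
  destruct (Req_dec L2 0) as [Z | NZ].
  - exists t; split; [lra | left].
    assert (n2 = 0) by nra.
    assert (n1 = 0) by nra.
    rewrite gram_sqdist_critical, Rminus_eq_0; nra.
  - exists (t - s * c / L2); split; [split | left].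
    + apply Rmult_le_reg_r with L2; [lra|]. field_simplify; lra.
    + apply Rmult_le_reg_r with L2; [lra|]. field_simplify; [nra | lra].
    + apply Rmult_le_reg_r with L2; [lra|].
      rewrite gram_sqdist_critical.
      replace ((0 - s) ^ 2 * L1 + (t - s * c / L2 - t) ^ 2 * L2
               - 2 * (0 - s) * (t - s * c / L2 - t) * c)
        with (s ^ 2 * (L1 * L2 - c ^ 2) / L2) by (field; lra).
      field_simplify; lra.
Qed.

(* Case t L2 < s c: the point of L1 nearest to s2p is x(s - t c / L1). *)
Lemma endpoint_close_second : t * L2 < s * c -> endpoint_close G (2 * D).
Proof.
  intros Hsc.
  pose proof (critical_defect_bound) as Hdef.
  pose proof abs_e1e2_le as Hc; apply Rabs_le_between in Hc.
  destruct Hpsd as (H1 & H2 & Hcs & Hnn).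
  pose proof (Hnn s t).
  pose proof (sqrt_pos L1); pose proof (sqrt_pos L2).
  pose proof (sqrt_sqrt L1 H1); pose proof (sqrt_sqrt L2 H2).
  assert (0 < c) by nra.
  assert (0 < n1) by nra. assert (0 < n2) by nra.
  assert (0 < L1) by nra. assert (0 < L2) by nra.
  assert (Htn : t * n2 < s * n1).
  { apply Rmult_lt_reg_r with n2; nra. }
  assert (Hts : t ^ 2 * L2 <= s ^ 2 * L1).
  { assert (0 <= t * n2) by nra. nra. }
  assert (Hdef1 : t ^ 2 * (L1 * L2 - c ^ 2) <= D * L1).
  { apply Rmult_le_reg_r with L2; [lra|].
    assert (0 <= L1 * L2 - c ^ 2) by lra. nra. }
  exists (s - t * c / L1); split; [split | right; right; left].
  - apply Rmult_le_reg_r with L1; [lra|]. field_simplify; nra.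
  - enough (0 <= t * c / L1) by lra.
    apply Rdiv_le_0_compat; nra.
  - apply Rmult_le_reg_r with L1; [lra|].
    rewrite gram_sqdist_critical.
    replace ((s - t * c / L1 - s) ^ 2 * L1 + (0 - t) ^ 2 * L2
             - 2 * (s - t * c / L1 - s) * (0 - t) * c)
      with (t ^ 2 * (L1 * L2 - c ^ 2) / L1) by (field; lra).
    field_simplify; lra.
Qed.

Lemma endpoint_close_balanced : endpoint_close G (2 * D).
Proof.
  destruct (Rle_or_lt (s * c) (t * L2)).
  - now apply endpoint_close_first.
  - now apply endpoint_close_second.
Qed.
End Critical.

Lemma endpoint_close_of_gap G s t :
  0 < s < 1 -> 0 < t < 1 -> gram_psd G -> gram_critical G s t ->
  s * sqrt (e1e1 G) + (1 - t) * sqrt (e2e2 G) <= sqrt (gram_sqdist G 0 1) ->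
  endpoint_close G (2 * gram_sqdist G s t).
Proof.
  intros Hs Ht Hpsd Hcrit Hlen.
  destruct (Rle_or_lt (s * sqrt (e1e1 G)) ((1 - t) * sqrt (e2e2 G))).
  - now apply endpoint_close_balanced.
  - (* The reflection (s, t) |-> (1 - t, 1 - s) exchanges the two arms. *)
    set (G' := gram_swap (gram_rev G)).
    assert (EG : forall a b, gram_sqdist G' a b = gram_sqdist G (1 - b) (1 - a)).
    { intros a b; unfold G'; now rewrite gram_sqdist_swap, gram_sqdist_rev. }
    apply endpoint_close_rev, endpoint_close_swap; fold G'.
    replace (gram_sqdist G s t) with (gram_sqdist G' (1 - t) (1 - s))
      by (rewrite EG; f_equal; ring).
    apply endpoint_close_balanced; try lra.
    + apply gram_psd_swap, gram_psd_rev, Hpsd.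
    + apply gram_critical_swap, gram_critical_rev, Hcrit.
    + rewrite EG, Rminus_0_r, Rminus_eq_0; simpl; lra.
    + simpl; lra.
Qed.

Lemma endpoint_close_of_critical G s t :
  0 < s < 1 -> 0 < t < 1 -> gram_psd G -> gram_critical G s t ->
  sqrt (e1e1 G) + sqrt (e2e2 G) <=
    sqrt (gram_sqdist G 0 1) + sqrt (gram_sqdist G 1 0) ->
  endpoint_close G (2 * gram_sqdist G s t).
Proof.
  intros Hs Ht Hpsd Hcrit Htri.
  destruct (Rle_or_lt (s * sqrt (e1e1 G) + (1 - t) * sqrt (e2e2 G))
                      (sqrt (gram_sqdist G 0 1))).
  - now apply endpoint_close_of_gap.
  - apply endpoint_close_rev.
    replace (gram_sqdist G s t) with (gram_sqdist (gram_rev G) (1 - s) (1 - t))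
      by (rewrite gram_sqdist_rev; f_equal; ring).
    apply endpoint_close_of_gap; try lra.
    + apply gram_psd_rev, Hpsd.
    + apply gram_critical_rev, Hcrit.
    + rewrite gram_sqdist_rev, Rminus_0_r, Rminus_eq_0; simpl; lra.
Qed.

Lemma derivable_pt_lim_interior_min (f : R -> R) x l :
  0 < x < 1 -> derivable_pt_lim f x l ->
  (forall y, 0 <= y <= 1 -> f x <= f y) -> l = 0.
Proof.
  intros Hx Hl Hmin.
  exact (deriv_minimum f 0 1 x (exist _ l Hl) (proj1 Hx) (proj2 Hx)
           (fun y H0 H1 => Hmin y (conj (Rlt_le _ _ H0) (Rlt_le _ _ H1)))).
Qed.

Lemma gram_critical_of_min G s t :
  0 < s < 1 -> 0 < t < 1 ->
  (forall a b, 0 <= a <= 1 -> 0 <= b <= 1 -> gram_sqdist G s t <= gram_sqdist G a b) ->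
  gram_critical G s t.
Proof.
  intros Hs Ht Hmin; split.
  - enough (2 * (we1 G + s * e1e1 G - t * e1e2 G) = 0) by lra.
    apply (derivable_pt_lim_interior_min (fun a => gram_sqdist G a t) s); auto.
    + apply is_derive_Reals; unfold gram_sqdist; auto_derive; [easy | ring].
    + intros a Ha; apply Hmin; lra.
  - enough (2 * (- we2 G + t * e2e2 G - s * e1e2 G) = 0) by lra.
    apply (derivable_pt_lim_interior_min (fun b => gram_sqdist G s b) t); auto.
    + apply is_derive_Reals; unfold gram_sqdist; auto_derive; [easy | ring].
    + intros b Hb; apply Hmin; lra.
Qed.

Lemma endpoint_close_of_min G s t :
  0 <= s <= 1 -> 0 <= t <= 1 -> gram_psd G ->
  (forall a b, 0 <= a <= 1 -> 0 <= b <= 1 -> gram_sqdist G s t <= gram_sqdist G a b) ->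
  sqrt (e1e1 G) + sqrt (e2e2 G) <=
    sqrt (gram_sqdist G 0 1) + sqrt (gram_sqdist G 1 0) ->
  endpoint_close G (2 * gram_sqdist G s t).
Proof.
  intros Hs Ht Hpsd Hmin Htri.
  assert (HD : 0 <= gram_sqdist G s t) by apply Hpsd.
  destruct (Req_dec s 0) as [-> | Ns0].
  { exists t; split; [easy | left; lra]. }
  destruct (Req_dec s 1) as [-> | Ns1].
  { exists t; split; [easy | right; left; lra]. }
  destruct (Req_dec t 0) as [-> | Nt0].
  { exists s; split; [easy | right; right; left; lra]. }
  destruct (Req_dec t 1) as [-> | Nt1].
  { exists s; split; [easy | right; right; right; lra]. }
  apply endpoint_close_of_critical; try lra; auto.
  apply gram_critical_of_min; auto; lra.
Qed.

(* The projection of z onto [0, 1], written with [Rabs] so that its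
   continuity is handled by [reg]. *)
Definition clamp01 (z : R) : R := (Rabs z - Rabs (z - 1) + 1) / 2.

Lemma clamp01_cases z :
  z <= 0 /\ clamp01 z = 0 \/ 0 <= z <= 1 /\ clamp01 z = z \/ 1 <= z /\ clamp01 z = 1.
Proof.
  unfold clamp01; destruct (Rle_or_lt 0 z); destruct (Rle_or_lt 1 z);
    rewrite ?(Rabs_pos_eq z), ?(Rabs_left z), ?(Rabs_pos_eq (z - 1)),
      ?(Rabs_left (z - 1)) by lra; lra.
Qed.

Lemma clamp01_range z : 0 <= clamp01 z <= 1.
Proof. destruct (clamp01_cases z) as [[_ ->] | [[? ->] | [_ ->]]]; lra. Qed.

Lemma clamp01_nearest z b : 0 <= b <= 1 -> (clamp01 z - z) ^ 2 <= (b - z) ^ 2.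
Proof.
  intros Hb; pose proof (pow2_ge_0 (b - z)).
  destruct (clamp01_cases z) as [[? ->] | [[? ->] | [? ->]]];
    [nra | rewrite Rminus_eq_0; simpl; lra | nra].
Qed.

Lemma affine_nonneg_const x y : (forall b, 0 <= x + b * y) -> y = 0.
Proof.
  intros Hnn; destruct (Req_dec y 0) as [| Hy]; [easy |].
  specialize (Hnn (- (x + 1) / y)).
  field_simplify in Hnn; [lra | exact Hy].
Qed.

Lemma gram_sqdist_min_exists G :
  gram_psd G ->
  exists s t, 0 <= s <= 1 /\ 0 <= t <= 1 /\
    forall a b, 0 <= a <= 1 -> 0 <= b <= 1 -> gram_sqdist G s t <= gram_sqdist G a b.
Proof.
  intros (H1 & H2 & Hcs & Hnn).
  set (T s := clamp01 ((we2 G + s * e1e2 G) / e2e2 G)).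
  assert (HT : forall s b, 0 <= b <= 1 -> gram_sqdist G s (T s) <= gram_sqdist G s b).
  { intros s b Hb; destruct (Req_dec (e2e2 G) 0) as [Z | NZ].
    - assert (Hc : e1e2 G = 0) by (rewrite Z in Hcs; nra).
      assert (Hw : we2 G = 0).
      { enough (- 2 * we2 G = 0) by lra.
        apply (affine_nonneg_const (ww G)); intros b'.
        specialize (Hnn 0 b'); unfold gram_sqdist in Hnn; rewrite Z, Hc in Hnn; lra. }
      unfold gram_sqdist; rewrite Z, Hc, Hw; lra.
    - set (z := (we2 G + s * e1e2 G) / e2e2 G).
      assert (E : forall b, gram_sqdist G s b =
        ww G + 2 * s * we1 G + s ^ 2 * e1e1 G - e2e2 G * z ^ 2 + e2e2 G * (b - z) ^ 2).
      { intros; unfold gram_sqdist, z; field; lra. }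
      rewrite !E; pose proof (clamp01_nearest z b Hb); unfold T; fold z; nra. }
  destruct (continuity_ab_min (fun s => gram_sqdist G s (T s)) 0 1) as (s & Hmin & Hs).
  { lra. }
  { intros; unfold gram_sqdist, T, clamp01; reg. }
  exists s, (T s); split; [easy | split; [apply clamp01_range |]].
  intros a b Ha Hb; apply Rle_trans with (gram_sqdist G a (T a)); auto.
Qed.

Definition vsub (x y : vec3) : vec3 :=
  let '(x1, x2, x3) := x in let '(y1, y2, y3) := y in (x1 - y1, x2 - y2, x3 - y3).

Definition vdot (x y : vec3) : R :=
  let '(x1, x2, x3) := x in let '(y1, y2, y3) := y in x1 * y1 + x2 * y2 + x3 * y3.

Definition gram_of (a b p q : vec3) : gram :=
  let w := vsub a p in let e1 := vsub b a in let e2 := vsub q p in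
  Gram (vdot w w) (vdot w e1) (vdot w e2) (vdot e1 e1) (vdot e2 e2) (vdot e1 e2).

Lemma vdot_self_nonneg x : 0 <= vdot x x.
Proof. destruct x as [[x1 x2] x3]; simpl; nra. Qed.

Lemma vdot_Cauchy_Schwarz x y : vdot x y ^ 2 <= vdot x x * vdot y y.
Proof.
  destruct x as [[x1 x2] x3], y as [[y1 y2] y3]; simpl.
  (* Lagrange's identity *)
  pose proof (pow2_ge_0 (x1 * y2 - x2 * y1)); pose proof (pow2_ge_0 (x1 * y3 - x3 * y1)).
  pose proof (pow2_ge_0 (x2 * y3 - x3 * y2)).
  nra.
Qed.

Lemma edist_vdot x y : edist x y = sqrt (vdot (vsub x y) (vsub x y)).
Proof. destruct x as [[x1 x2] x3], y as [[y1 y2] y3]; simpl; f_equal; ring. Qed.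

Lemma edist_sym x y : edist x y = edist y x.
Proof. destruct x as [[x1 x2] x3], y as [[y1 y2] y3]; simpl; f_equal; ring. Qed.

Lemma lerp_0 a b : lerp a b 0 = a.
Proof. destruct a as [[a1 a2] a3], b as [[b1 b2] b3]; simpl; f_equal; [f_equal|]; ring. Qed.

Lemma lerp_1 a b : lerp a b 1 = b.
Proof. destruct a as [[a1 a2] a3], b as [[b1 b2] b3]; simpl; f_equal; [f_equal|]; ring. Qed.

Lemma gram_sqdist_of a b p q s t :
  gram_sqdist (gram_of a b p q) s t =
    vdot (vsub (lerp a b s) (lerp p q t)) (vsub (lerp a b s) (lerp p q t)).
Proof.
  destruct a as [[a1 a2] a3], b as [[b1 b2] b3], p as [[p1 p2] p3], q as [[q1 q2] q3].
  unfold gram_sqdist; simpl; ring.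
Qed.

Lemma edist_lerp_lerp a b p q s t :
  edist (lerp a b s) (lerp p q t) = sqrt (gram_sqdist (gram_of a b p q) s t).
Proof. now rewrite edist_vdot, gram_sqdist_of. Qed.

Lemma edist_gram_of_e1e1 a b p q : edist a b = sqrt (e1e1 (gram_of a b p q)).
Proof. destruct a as [[a1 a2] a3], b as [[b1 b2] b3]; simpl; f_equal; ring. Qed.

Lemma edist_gram_of_e2e2 a b p q : edist p q = sqrt (e2e2 (gram_of a b p q)).
Proof. destruct p as [[p1 p2] p3], q as [[q1 q2] q3]; simpl; f_equal; ring. Qed.

Lemma gram_of_psd a b p q : gram_psd (gram_of a b p q).
Proof.
  repeat split; try apply vdot_self_nonneg; [apply vdot_Cauchy_Schwarz |].
  intros s t; rewrite gram_sqdist_of; apply vdot_self_nonneg.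
Qed.

Lemma real_Glb_Rbar_bounds (E : R -> Prop) m d0 :
  E d0 -> (forall d, E d -> m <= d) ->
  m <= real (Glb_Rbar E) /\ forall d, E d -> real (Glb_Rbar E) <= d.
Proof.
  intros Hd0 Hm; destruct (Glb_Rbar_correct E) as [Hlb Hglb].
  assert (Hmle : Rbar_le m (Glb_Rbar E)) by (apply Hglb; exact Hm).
  destruct (Glb_Rbar E) as [r | |]; simpl in *.
  - split; [exact Hmle | exact Hlb].
  - exact (False_ind _ (Hlb d0 Hd0)).
  - exact (False_ind _ Hmle).
Qed.

Lemma dist_pt_segment_le e p q u :
  0 <= u <= 1 -> dist_pt e (segment p q) <= edist e (lerp p q u).
Proof.
  intros Hu; unfold dist_pt.
  assert (Hseg : exists x, segment p q x /\ edist e (lerp p q u) = edist e x)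
    by (exists (lerp p q u); split; [exists u |]; easy).
  apply (real_Glb_Rbar_bounds _ 0 _ Hseg); [| exact Hseg].
  intros d (x & _ & ->); rewrite edist_vdot; apply sqrt_pos.
Qed.

Lemma dist_sets_segment_ge a b p q m :
  (forall s t, 0 <= s <= 1 -> 0 <= t <= 1 -> m <= edist (lerp a b s) (lerp p q t)) ->
  m <= dist_sets (segment a b) (segment p q).
Proof.
  intros Hm; unfold dist_sets.
  apply (real_Glb_Rbar_bounds _ m (edist a p)).
  - exists a, p; repeat split; [exists 0 | exists 0]; rewrite lerp_0; split; lra || easy.
  - intros d (x & y & (s & Hs & ->) & (t & Ht & ->) & ->); auto.
Qed.

Lemma endpoint_close_dist_pt a b p q r :
  endpoint_close (gram_of a b p q) r ->
  Rmin (Rmin (dist_pt a (segment p q)) (dist_pt b (segment p q)))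
       (Rmin (dist_pt p (segment a b)) (dist_pt q (segment a b))) <= sqrt r.
Proof.
  intros (u & Hu & Hclose).
  assert (Hlerp : forall s t, gram_sqdist (gram_of a b p q) s t <= r ->
                  edist (lerp a b s) (lerp p q t) <= sqrt r).
  { intros s t H; rewrite edist_lerp_lerp; now apply sqrt_le_1_alt. }
  destruct Hclose as [H | [H | [H | H]]].
  - eapply Rle_trans; [apply Rmin_l |]; eapply Rle_trans; [apply Rmin_l |].
    eapply Rle_trans; [apply (dist_pt_segment_le _ _ _ u Hu) |].
    rewrite <- (lerp_0 a b) at 1; auto.
  - eapply Rle_trans; [apply Rmin_l |]; eapply Rle_trans; [apply Rmin_r |].
    eapply Rle_trans; [apply (dist_pt_segment_le _ _ _ u Hu) |].
    rewrite <- (lerp_1 a b) at 1; auto.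
  - eapply Rle_trans; [apply Rmin_r |]; eapply Rle_trans; [apply Rmin_l |].
    eapply Rle_trans; [apply (dist_pt_segment_le _ _ _ u Hu) |].
    rewrite edist_sym, <- (lerp_0 p q) at 1; auto.
  - eapply Rle_trans; [apply Rmin_r |]; eapply Rle_trans; [apply Rmin_r |].
    eapply Rle_trans; [apply (dist_pt_segment_le _ _ _ u Hu) |].
    rewrite edist_sym, <- (lerp_1 p q) at 1; auto.
Qed.

Theorem lemma5 (s1p s1m s2p s2m : vec3) :
  edist s1p s1m + edist s2p s2m <= edist s1p s2m + edist s2p s1m ->
  dist_sets (segment s1p s1m) (segment s2p s2m) >=
    / sqrt 2 *
    Rmin (Rmin (dist_pt s1p (segment s2p s2m)) (dist_pt s1m (segment s2p s2m)))
         (Rmin (dist_pt s2p (segment s1p s1m)) (dist_pt s2m (segment s1p s1m))).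
Proof.
  intros Htri.
  set (G := gram_of s1p s1m s2p s2m).
  destruct (gram_sqdist_min_exists G (gram_of_psd _ _ _ _)) as (s & t & Hs & Ht & Hmin).
  assert (Hclose : endpoint_close G (2 * gram_sqdist G s t)).
  { apply endpoint_close_of_min; [easy | easy | apply gram_of_psd | easy | unfold G].
    rewrite <- edist_gram_of_e1e1, <- edist_gram_of_e2e2, <- !edist_lerp_lerp,
      !lerp_0, !lerp_1, (edist_sym s1m).
    exact Htri. }
  assert (Hlow : sqrt (gram_sqdist G s t) <= dist_sets (segment s1p s1m) (segment s2p s2m)).
  { apply dist_sets_segment_ge; intros a b Ha Hb.
    rewrite edist_lerp_lerp; apply sqrt_le_1_alt; auto. }
  pose proof (endpoint_close_dist_pt _ _ _ _ _ Hclose) as Hup.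
  pose proof (gram_of_psd s1p s1m s2p s2m) as (_ & _ & _ & Hnn).
  rewrite sqrt_mult in Hup by (lra || apply Hnn).
  assert (0 < sqrt 2) by (apply sqrt_lt_R0; lra).
  apply Rle_ge, Rle_trans with (sqrt (gram_sqdist G s t)); [| exact Hlow].
  apply Rmult_le_reg_l with (sqrt 2); [easy |].
  rewrite <- Rmult_assoc, Rinv_r, Rmult_1_l by lra; exact Hup.
Qed.
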